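(* Let $n \ge 4$ and $1 \le a \le b \le n$ be integers, and consider the problem $\mathrm{IK}^n(x_a\cdots x_b)$ of minimizing $x_a x_{a+1}\cdots x_b$ over $\mathcal{X}^n$. Let $l \in \{1,\ldots,n\}$. Then: (a) if $a = b$, then $\bar x(b)$ is a minimizer of $x_b$ over $\mathcal{X}^n$; (b) if $b < n-1$ and $\bar x(l)$ is a minimizer of $x_a\cdots x_b$, then $a \le l \le 2 + \log_2(\log_2 n + \log_2 e)$ or $l = b$; (c) if $a=1$ and $b=n$, then $\bar x(n) = \big(\frac1{s_1},\ldots,\frac1{s_{n-1}},\frac1{s_n-1}\big)$ is the unique minimizer of $x_1\cdots x_n$ over $\mathcal{X}^n$; (d) if $b = n$, then $\bar x(l)$ is a minimizer of $x_a\cdots x_n$ if and only if $l = n$; (e) if $b = n-1$, then $\bar x(l)$ is a minimizer of $x_a\cdots x_{n-1}$ if and only if either $l = n-1$, or $n = 4$, $a\in\{1,2\}$ and $l = 2$.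
   Context: The Sylvester sequence: $s_1 = 2$, $s_i = \prod_{j=1}^{i-1} s_j + 1$ for $i\ge2$. $\mathcal{X}^n$ is the set of $x\in\mathbb{R}^n$ with $x_1+\cdots+x_n = 1$, $1 \ge x_1 \ge \cdots \ge x_n \ge 0$, and $x_1\cdots x_j \le x_{j+1}+\cdots+x_n$ for all $j\in\{1,\ldots,n-1\}$. For $l\in\{1,\ldots,n\}$, $\bar x(l) := \big(\frac{1}{s_1},\ldots,\frac{1}{s_{l-1}}, \frac{1}{(n-l+1)(s_l-1)},\ldots,\frac{1}{(n-l+1)(s_l-1)}\big)\in\mathbb{R}^n$ (last value repeated $n-l+1$ times); these lie in $\mathcal{X}^n$. *)

(* Stdlib (classical reals); vectors in R^n are functions nat -> R,
   only the coordinates 1..n are meaningful. *)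
From Stdlib Require Import Reals Lra Lia.
Open Scope R_scope.

Fixpoint rsum (f : nat -> R) (a k : nat) : R :=
  match k with O => 0 | S k' => f a + rsum f (S a) k' end.
Fixpoint rprod (f : nat -> R) (a k : nat) : R :=
  match k with O => 1 | S k' => f a * rprod f (S a) k' end.

(* sum_{i=a}^{b} f i, prod_{i=a}^{b} f i (empty if b < a) *)
Definition sum_range (f : nat -> R) (a b : nat) : R := rsum f a (S b - a).
Definition prod_range (f : nat -> R) (a b : nat) : R := rprod f a (S b - a).

(* Sylvester sequence: s_1 = 2, s_i = s_1 ... s_{i-1} + 1.
   sylv_prod k = s_1 * ... * s_k, computed recursively via
   sylv_prod (k+1) = sylv_prod k * s_{k+1} = sylv_prod k * (sylv_prod k + 1). *)
Fixpoint sylv_prod (k : nat) : R :=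
  match k with O => 1 | S k' => sylv_prod k' * (sylv_prod k' + 1) end.
Definition sylv (i : nat) : R := sylv_prod (i - 1) + 1.

Definition in_X (n : nat) (x : nat -> R) : Prop :=
  sum_range x 1 n = 1 /\
  x 1%nat <= 1 /\
  (forall i : nat, (1 <= i < n)%nat -> x (S i) <= x i) /\
  0 <= x n /\
  (forall j : nat, (1 <= j <= n - 1)%nat ->
     prod_range x 1 j <= sum_range x (S j) n).

Definition xbar (n l : nat) (i : nat) : R :=
  if (i <? l)%nat then / sylv i
  else / (INR (n - l + 1) * (sylv l - 1)).

Definition is_minimizer (n a b : nat) (x : nat -> R) : Prop :=
  in_X n x /\ forall y, in_X n y -> prod_range x a b <= prod_range y a b.

Definition log2 (t : R) : R := ln t / ln 2.

From Stdlib Require Import Reals Lra Lia.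
Open Scope R_scope.

(** Write [c(n,l)] for the common value of the last [n-l+1] coordinates of
   [xbar n l] ([plateau n l] below) and [s_1 ... s_k] for [sylv_prod k].

   The proof rests on two classical Abel-summation inequalities for
   positive sequences (a nonincreasing sequence dominated in the sense of
   log-majorization has smaller sum; a nonincreasing sequence whose suffix
   sums dominate has larger product, with equality only if the sequences
   agree).  Combined with the telescoping identity
   [sum_{i>k} 1/s_i = 1/(s_1...s_k)], they give the key "tail bound": every
   [y] in X^n has [y_m + ... + y_n >= 1/(s_1...s_{m-1})], with equality for
   [xbar n n].  Parts (a), (c) and (d) follow from the tail bound directly.

   For the other parts we compare the points [xbar n l] among themselves
   through the logarithmic objective [logval n a b l = ln (x_a ... x_b)]:
   passing from [l] to [l+1] changes it by [ln P - ln Q] for two explicit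
   polynomial expressions, whose comparison is elementary.  Part (e) also
   needs a minimality argument over all of X^n: any [y] in X^n suffix-majorizes
   a convex combination of two consecutive points [xbar n l], [xbar n (l+1)],
   and concavity of [ln] transfers the comparison of the [logval]s to [y]. *)

Lemma ln_le_sub1 r : 0 < r -> ln r <= r - 1.
Proof.
  intro Hr. pose proof (exp_ineq1_le (ln r)) as H. rewrite exp_ln in H; lra.
Qed.

Lemma ln_lt_sub1 r : 0 < r -> r <> 1 -> ln r < r - 1.
Proof.
  intros Hr Hr1. pose proof (exp_ineq1 (ln r) (ln_neq_0 r Hr1 Hr)) as H.
  rewrite exp_ln in H; lra.
Qed.

Lemma ln_div p m : 0 < p -> 0 < m -> ln (p * / m) = ln p - ln m.
Proof.
  intros Hp Hm. rewrite ln_mult, ln_Rinv; try lra. now apply Rinv_0_lt_compat.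
Qed.

Lemma ln_le x y : 0 < x -> x <= y -> ln x <= ln y.
Proof.
  intros Hx [Hxy | ->]; [left; now apply ln_increasing | lra].
Qed.

Lemma ln_concave lam p q : 0 <= lam <= 1 -> 0 < p -> 0 < q ->
  lam * ln p + (1 - lam) * ln q <= ln (lam * p + (1 - lam) * q).
Proof.
  intros Hl Hp Hq. set (m := lam * p + (1 - lam) * q).
  assert (Hm : 0 < m) by (unfold m; destruct (Req_dec lam 0); subst; nra).
  assert (Lp := ln_le_sub1 (p * / m) ltac:(apply Rdiv_lt_0_compat; lra)).
  assert (Lq := ln_le_sub1 (q * / m) ltac:(apply Rdiv_lt_0_compat; lra)).
  rewrite ln_div in Lp, Lq by lra.
  assert (Hmix : lam * (ln p - ln m) + (1 - lam) * (ln q - ln m)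
                 <= lam * (p * / m - 1) + (1 - lam) * (q * / m - 1))
    by (apply Rplus_le_compat; apply Rmult_le_compat_l; lra).
  replace (lam * (p * / m - 1) + (1 - lam) * (q * / m - 1)) with (m * / m - 1)
    in Hmix by (unfold m; ring).
  rewrite Rinv_r in Hmix by lra. lra.
Qed.

Lemma INR_ge1 k : (1 <= k)%nat -> 1 <= INR k.
Proof. intro H. apply (le_INR 1); exact H. Qed.

Lemma INR_ge3 k : (3 <= k)%nat -> 3 <= INR k.
Proof. intro H. replace 3 with (INR 3) by (simpl; lra). now apply le_INR. Qed.

Lemma rsum_ext f g a k : (forall i, (a <= i < a + k)%nat -> f i = g i) ->
  rsum f a k = rsum g a k.
Proof.
  revert a; induction k; intros a H; simpl; auto.
  rewrite H by lia. rewrite (IHk (S a)) by (intros; apply H; lia). reflexivity.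
Qed.

Lemma rsum_le f g a k : (forall i, (a <= i < a + k)%nat -> f i <= g i) ->
  rsum f a k <= rsum g a k.
Proof.
  revert a; induction k; intros a H; simpl; [lra|].
  apply Rplus_le_compat; [apply H; lia | apply IHk; intros; apply H; lia].
Qed.

Lemma rsum_split f a k1 k2 : rsum f a (k1 + k2) = rsum f a k1 + rsum f (a + k1) k2.
Proof.
  revert a; induction k1; intros a; simpl; [rewrite Nat.add_0_r; ring|].
  rewrite IHk1. replace (S a + k1)%nat with (a + S k1)%nat by lia. ring.
Qed.

Lemma rsum_last f a k : rsum f a (S k) = rsum f a k + f (a + k)%nat.
Proof. replace (S k) with (k + 1)%nat by lia. rewrite rsum_split. simpl. ring. Qed.

Lemma rsum_plus f g a k : rsum (fun i => f i + g i) a k = rsum f a k + rsum g a k.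
Proof. revert a; induction k; intros a; simpl; [ring | rewrite IHk; ring]. Qed.

Lemma rsum_minus f g a k : rsum (fun i => f i - g i) a k = rsum f a k - rsum g a k.
Proof. revert a; induction k; intros a; simpl; [ring | rewrite IHk; ring]. Qed.

Lemma rsum_scal c f a k : rsum (fun i => c * f i) a k = c * rsum f a k.
Proof. revert a; induction k; intros a; simpl; [ring | rewrite IHk; ring]. Qed.

Lemma rsum_const c a k : rsum (fun _ => c) a k = INR k * c.
Proof. revert a; induction k; intros a; simpl rsum; [simpl; ring | rewrite IHk, S_INR; ring]. Qed.

Lemma rsum_bounds f a k lo hi : (forall i, (a <= i < a + k)%nat -> lo <= f i <= hi) ->
  INR k * lo <= rsum f a k <= INR k * hi.
Proof.
  intro H. rewrite <- !rsum_const with (a := a).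
  split; apply rsum_le; intros; apply H; auto.
Qed.

Lemma rsum_nonneg f a k : (forall i, (a <= i < a + k)%nat -> 0 <= f i) -> 0 <= rsum f a k.
Proof.
  intro H. replace 0 with (rsum (fun _ => 0) a k) by (rewrite rsum_const; ring).
  now apply rsum_le.
Qed.

Lemma rsum_zero_each f a k : (forall i, (a <= i < a + k)%nat -> 0 <= f i) ->
  rsum f a k <= 0 -> forall i, (a <= i < a + k)%nat -> f i = 0.
Proof.
  revert a; induction k; intros a H Hs i Hi; [lia|]. simpl in Hs.
  assert (0 <= rsum f (S a) k) by (apply rsum_nonneg; intros; apply H; lia).
  assert (0 <= f a) by (apply H; lia).
  destruct (Nat.eq_dec i a) as [->|Hia]; [lra|].
  apply (IHk (S a)); try lia; [intros; apply H; lia | lra].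
Qed.

Lemma rprod_ext f g a k : (forall i, (a <= i < a + k)%nat -> f i = g i) ->
  rprod f a k = rprod g a k.
Proof.
  revert a; induction k; intros a H; simpl; auto.
  rewrite H by lia. rewrite (IHk (S a)) by (intros; apply H; lia). reflexivity.
Qed.

Lemma rprod_split f a k1 k2 : rprod f a (k1 + k2) = rprod f a k1 * rprod f (a + k1) k2.
Proof.
  revert a; induction k1; intros a; simpl; [rewrite Nat.add_0_r; ring|].
  rewrite IHk1. replace (S a + k1)%nat with (a + S k1)%nat by lia. ring.
Qed.

Lemma rprod_last f a k : rprod f a (S k) = rprod f a k * f (a + k)%nat.
Proof. replace (S k) with (k + 1)%nat by lia. rewrite rprod_split. simpl. ring. Qed.

Lemma rprod_pos f a k : (forall i, (a <= i < a + k)%nat -> 0 < f i) -> 0 < rprod f a k.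
Proof.
  revert a; induction k; intros a H; simpl; [lra|].
  apply Rmult_lt_0_compat; [apply H; lia | apply IHk; intros; apply H; lia].
Qed.

Lemma rprod_01 f a k : (forall i, (a <= i < a + k)%nat -> 0 <= f i <= 1) ->
  0 <= rprod f a k <= 1.
Proof.
  revert a; induction k; intros a H; simpl; [lra|].
  assert (H1 := H a ltac:(lia)).
  assert (H2 := IHk (S a) ltac:(intros; apply H; lia)).
  split; [apply Rmult_le_pos; lra|].
  replace 1 with (1 * 1) by ring. apply Rmult_le_compat; lra.
Qed.

Lemma ln_rprod f a k : (forall i, (a <= i < a + k)%nat -> 0 < f i) ->
  ln (rprod f a k) = rsum (fun i => ln (f i)) a k.
Proof.
  revert a; induction k; intros a H; simpl; [apply ln_1|].
  rewrite ln_mult, IHk; auto; try (intros; apply H; lia).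
  apply rprod_pos; intros; apply H; lia.
Qed.

Lemma rprod_le_iff_ln f g a k :
  (forall i, (a <= i < a + k)%nat -> 0 < f i /\ 0 < g i) ->
  rprod f a k <= rprod g a k <->
  rsum (fun i => ln (f i)) a k <= rsum (fun i => ln (g i)) a k.
Proof.
  intro H.
  assert (Hf : 0 < rprod f a k) by (apply rprod_pos; intros; apply H; lia).
  assert (Hg : 0 < rprod g a k) by (apply rprod_pos; intros; apply H; lia).
  rewrite <- !ln_rprod by (intros; apply H; lia).
  split; [now apply ln_le|].
  intro Hl. destruct (Rle_lt_dec (rprod f a k) (rprod g a k)) as [|Hlt]; auto.
  pose proof (ln_increasing _ _ Hg Hlt). lra.
Qed.

(** ** Abel summation and two majorization inequalities *)

Lemma abel_prefix_bound (w d : nat -> R) a K :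
  (forall i, (a <= i)%nat -> (S i <= a + K)%nat -> w (S i) <= w i) ->
  (forall m, (m <= S K)%nat -> 0 <= rsum d a m) ->
  w (a + K)%nat * rsum d a (S K) <= rsum (fun i => w i * d i) a (S K).
Proof.
  induction K; intros Hw Hd; [simpl; rewrite Nat.add_0_r; lra|].
  rewrite (rsum_last (fun i => w i * d i)), (rsum_last d).
  assert (IH := IHK ltac:(intros; apply Hw; lia) ltac:(intros; apply Hd; lia)).
  assert (HD := Hd (S K) ltac:(lia)).
  assert (Hw1 := Hw (a + K)%nat ltac:(lia) ltac:(lia)).
  replace (S (a + K)) with (a + S K)%nat in Hw1 by lia.
  assert (w (a + S K)%nat * rsum d a (S K) <= w (a + K)%nat * rsum d a (S K))
    by (apply Rmult_le_compat_r; lra).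
  lra.
Qed.

Lemma abel_prefix (w d : nat -> R) a K :
  (forall i, (a <= i)%nat -> (S i < a + K)%nat -> w (S i) <= w i) ->
  (forall i, (a <= i < a + K)%nat -> 0 <= w i) ->
  (forall m, (m <= K)%nat -> 0 <= rsum d a m) ->
  0 <= rsum (fun i => w i * d i) a K.
Proof.
  intros Hw Hp Hd. destruct K as [|K]; [simpl; lra|].
  eapply Rle_trans; [|apply abel_prefix_bound; auto; intros; apply Hw; lia].
  apply Rmult_le_pos; [apply Hp; lia | apply Hd; lia].
Qed.

Lemma abel_suffix (w d : nat -> R) K : forall a,
  (forall i, (a <= i)%nat -> (S i < a + K)%nat -> w i <= w (S i)) ->
  (forall m, (a <= m <= a + K)%nat -> 0 <= rsum d m (a + K - m)) ->
  w a * rsum d a K <= rsum (fun i => w i * d i) a K.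
Proof.
  induction K; intros a Hw Hd; [simpl; lra|]. simpl.
  assert (IH := IHK (S a) ltac:(intros; apply Hw; lia)
    ltac:(intros m Hm; replace (S a + K - m)%nat with (a + S K - m)%nat by lia;
          apply Hd; lia)).
  assert (HE := Hd (S a) ltac:(lia)). replace (a + S K - S a)%nat with K in HE by lia.
  destruct K as [|K]; [simpl in *; lra|].
  assert (w a <= w (S a)) by (apply Hw; lia).
  assert (w a * rsum d (S a) (S K) <= w (S a) * rsum d (S a) (S K))
    by (apply Rmult_le_compat_r; lra).
  lra.
Qed.

Lemma log_majorization_sum (x y : nat -> R) a K :
  (forall i, (a <= i < a + K)%nat -> 0 < x i /\ 0 < y i) ->
  (forall i, (a <= i)%nat -> (S i < a + K)%nat -> x (S i) <= x i) ->
  (forall m, (m <= K)%nat -> 0 <= rsum (fun i => ln (y i) - ln (x i)) a m) ->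
  rsum x a K <= rsum y a K.
Proof.
  intros Hp Hdec Hd.
  assert (H := abel_prefix x (fun i => ln (y i) - ln (x i)) a K Hdec
     ltac:(intros i Hi; destruct (Hp i Hi); lra) Hd).
  assert (Hpt : rsum (fun i => x i * (ln (y i) - ln (x i))) a K
                <= rsum (fun i => y i - x i) a K).
  { apply rsum_le. intros i Hi. destruct (Hp i Hi) as [Hx Hy].
    rewrite <- ln_div by auto.
    assert (L := ln_le_sub1 (y i * / x i) ltac:(apply Rdiv_lt_0_compat; lra)).
    apply Rmult_le_compat_l with (r := x i) in L; [|lra].
    replace (x i * (y i * / x i - 1)) with (y i - x i) in L by (field; lra). lra. }
  rewrite rsum_minus in Hpt. lra.
Qed.

Lemma ln_ratio_bound z y : 0 < z -> 0 < y -> / z * (z - y) <= ln z - ln y.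
Proof.
  intros Hz Hy.
  assert (L := ln_le_sub1 (y * / z) ltac:(apply Rdiv_lt_0_compat; lra)).
  rewrite ln_div in L by auto.
  replace (/ z * (z - y)) with (1 - y * / z) by (field; lra). lra.
Qed.

Section SuffixMajorization.
Variables (z y : nat -> R) (a K : nat).
Hypothesis Hpos : forall i, (a <= i < a + K)%nat -> 0 < z i /\ 0 < y i.
Hypothesis Hdec : forall i, (a <= i)%nat -> (S i < a + K)%nat -> z (S i) <= z i.
Hypothesis Hsuf : forall m, (a <= m <= a + K)%nat ->
  rsum y m (a + K - m) <= rsum z m (a + K - m).

Lemma suffix_majorization_gap : 0 <= rsum (fun i => / z i * (z i - y i)) a K.
Proof.
  destruct K as [|K']; [simpl; lra|].
  eapply Rle_trans; [|apply abel_suffix].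
  - apply Rmult_le_pos; [left; apply Rinv_0_lt_compat, Hpos; lia|].
    rewrite rsum_minus. assert (H := Hsuf a ltac:(lia)).
    replace (a + S K' - a)%nat with (S K') in H by lia. lra.
  - intros i H1 H2. apply Rinv_le_contravar; [apply Hpos; lia | apply Hdec; lia].
  - intros m Hm. rewrite rsum_minus. specialize (Hsuf m Hm). lra.
Qed.

Lemma suffix_majorization_log :
  rsum (fun i => ln (y i)) a K <= rsum (fun i => ln (z i)) a K.
Proof.
  assert (Hgap := suffix_majorization_gap).
  assert (Hpt : rsum (fun i => / z i * (z i - y i)) a K
                <= rsum (fun i => ln (z i) - ln (y i)) a K).
  { apply rsum_le. intros i Hi. destruct (Hpos i Hi). now apply ln_ratio_bound. }
  rewrite rsum_minus in Hpt. lra.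
Qed.

Lemma suffix_majorization_eq :
  rsum (fun i => ln (z i)) a K <= rsum (fun i => ln (y i)) a K ->
  forall i, (a <= i < a + K)%nat -> z i = y i.
Proof.
  intros Heq. assert (H := suffix_majorization_gap).
  set (g := fun i => (ln (z i) - ln (y i)) - / z i * (z i - y i)).
  assert (Hg : forall i, (a <= i < a + K)%nat -> g i = 0).
  { apply rsum_zero_each.
    - intros i Hi. unfold g. destruct (Hpos i Hi).
      pose proof (ln_ratio_bound (z i) (y i)); lra.
    - unfold g. rewrite rsum_minus, rsum_minus. lra. }
  intros i Hi. specialize (Hg i Hi). unfold g in Hg. destruct (Hpos i Hi) as [Hz Hy].
  destruct (Req_dec (y i * / z i) 1) as [E|E].
  - apply (f_equal (fun t => t * z i)) in E. rewrite Rmult_assoc, Rinv_l in E by lra. lra.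
  - pose proof (ln_lt_sub1 (y i * / z i) ltac:(apply Rdiv_lt_0_compat; lra) E) as L.
    rewrite ln_div in L by auto.
    replace (/ z i * (z i - y i)) with (1 - y i * / z i) in Hg by (field; lra). lra.
Qed.

End SuffixMajorization.

(** ** The Sylvester sequence *)

Lemma sylv_prod_S k : sylv_prod (S k) = sylv_prod k * (sylv_prod k + 1).
Proof. reflexivity. Qed.

Lemma sylv_S k : sylv (S k) = sylv_prod k + 1.
Proof. unfold sylv. now replace (S k - 1)%nat with k by lia. Qed.

Lemma sylv_prod_ge1 k : 1 <= sylv_prod k.
Proof. induction k; [simpl; lra | rewrite sylv_prod_S; nra]. Qed.

Lemma sylv_prod_pos k : 0 < sylv_prod k.
Proof. pose proof (sylv_prod_ge1 k); lra. Qed.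

Lemma sylv_prod_mono j k : (j <= k)%nat -> sylv_prod j <= sylv_prod k.
Proof.
  induction 1 as [|k _ IH]; [lra|].
  rewrite sylv_prod_S. pose proof (sylv_prod_ge1 k). nra.
Qed.

Lemma sylv_prod_ge2 k : (1 <= k)%nat -> 2 <= sylv_prod k.
Proof. intro H. pose proof (sylv_prod_mono 1 k H) as H1. simpl in H1. lra. Qed.

Lemma sylv_prod_ge6 k : (2 <= k)%nat -> 6 <= sylv_prod k.
Proof. intro H. pose proof (sylv_prod_mono 2 k H) as H2. simpl in H2. lra. Qed.

Lemma sylv_prod_double_exp m : 2 ^ (2 ^ m)%nat <= sylv_prod (S m).
Proof.
  induction m; [simpl; lra|].
  rewrite sylv_prod_S. replace (2 ^ S m)%nat with (2 ^ m + 2 ^ m)%nat by (simpl; lia).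
  rewrite pow_add. assert (0 <= 2 ^ (2 ^ m)%nat) by (apply pow_le; lra).
  pose proof (sylv_prod_ge1 (S m)). nra.
Qed.

Lemma sylv_ge2 i : 2 <= sylv i.
Proof. unfold sylv. pose proof (sylv_prod_ge1 (i - 1)); lra. Qed.

Lemma sylv_pos i : 0 < sylv i.
Proof. pose proof (sylv_ge2 i); lra. Qed.

(** The defining recursion makes [sum 1/s_i] and [prod 1/s_i] telescope. *)
Lemma inv_sylv_S k : / sylv (S k) = / sylv_prod k - / sylv_prod (S k).
Proof. rewrite sylv_S, sylv_prod_S. pose proof (sylv_prod_ge1 k). field; lra. Qed.

Lemma sum_inv_sylv j K :
  rsum (fun i => / sylv i) (S j) K = / sylv_prod j - / sylv_prod (j + K).
Proof.
  revert j; induction K; intros j; simpl rsum; [rewrite Nat.add_0_r; ring|].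
  rewrite IHK, inv_sylv_S. replace (S j + K)%nat with (j + S K)%nat by lia. ring.
Qed.

Lemma sum_ln_inv_sylv j K :
  rsum (fun i => ln (/ sylv i)) (S j) K = ln (sylv_prod j) - ln (sylv_prod (j + K)).
Proof.
  revert j; induction K; intros j; simpl rsum; [rewrite Nat.add_0_r; ring|].
  rewrite IHK. replace (S j + K)%nat with (j + S K)%nat by lia.
  rewrite sylv_prod_S, ln_Rinv, sylv_S by apply sylv_pos.
  pose proof (sylv_prod_ge1 j). rewrite ln_mult by lra. ring.
Qed.

Lemma prod_inv_sylv j : rprod (fun i => / sylv i) 1 j = / sylv_prod j.
Proof.
  induction j; [simpl; lra|]. rewrite rprod_last, IHj. simpl (1 + j)%nat.
  rewrite sylv_S, sylv_prod_S. pose proof (sylv_prod_ge1 j). field; lra.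
Qed.

Definition plateau (n l : nat) : R := / (INR (n - l + 1) * sylv_prod (l - 1)).

Lemma xbar_lt n l i : (i < l)%nat -> xbar n l i = / sylv i.
Proof. intro H. unfold xbar. apply Nat.ltb_lt in H. now rewrite H. Qed.

Lemma xbar_ge n l i : (l <= i)%nat -> xbar n l i = plateau n l.
Proof.
  intro H. unfold xbar, plateau. apply Nat.ltb_ge in H. rewrite H.
  unfold sylv. f_equal. f_equal. ring.
Qed.

Lemma plateau_pos n l : 0 < plateau n l.
Proof.
  apply Rinv_0_lt_compat, Rmult_lt_0_compat;
    [apply lt_0_INR; lia | apply sylv_prod_pos].
Qed.

Lemma plateau_le1 n l : plateau n l <= 1.
Proof.
  unfold plateau. pose proof (INR_ge1 (n - l + 1) ltac:(lia)).
  pose proof (sylv_prod_ge1 (l - 1)).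
  rewrite <- Rinv_1. apply Rinv_le_contravar; nra.
Qed.

Lemma plateau_succ n l : (l < n)%nat ->
  plateau n (S l) = / (INR (n - l) * sylv_prod l).
Proof.
  intro. unfold plateau. now replace (n - S l + 1)%nat with (n - l)%nat
    by lia; replace (S l - 1)%nat with l by lia.
Qed.

Lemma plateau_last n : (1 <= n)%nat -> plateau n n = / sylv_prod (n - 1).
Proof.
  intro. unfold plateau. replace (n - n + 1)%nat with 1%nat by lia.
  simpl INR. now rewrite Rmult_1_l.
Qed.

Lemma plateau_decr n l : (3 <= n)%nat -> (1 <= l < n)%nat ->
  plateau n (S l) < plateau n l.
Proof.
  intros Hn Hl. rewrite plateau_succ by lia. unfold plateau.
  replace (n - l + 1)%nat with (S (n - l)) by lia. rewrite S_INR.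
  replace l with (S (l - 1)) at 2 by lia. rewrite sylv_prod_S.
  set (p := sylv_prod (l - 1)). set (d := INR (n - l)).
  assert (Hp : 1 <= p) by apply sylv_prod_ge1.
  assert (Hd : 1 <= d) by (apply INR_ge1; lia).
  assert (Hx : 1 < d * p).
  { destruct (Nat.eq_dec (n - l) 1) as [E|E].
    - assert (2 <= p) by (apply sylv_prod_ge2; lia). unfold d. rewrite E. simpl. lra.
    - assert (2 <= d) by (apply (le_INR 2); lia). nra. }
  apply Rinv_lt_contravar; nra.
Qed.

Lemma plateau_decr_lt n l l' : (3 <= n)%nat -> (1 <= l)%nat -> (l < l' <= n)%nat ->
  plateau n l' < plateau n l.
Proof.
  intros Hn Hl [Hll' Hl'n]. induction Hll' as [|m Hm IH].
  - apply plateau_decr; lia.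
  - pose proof (plateau_decr n m Hn ltac:(lia)). specialize (IH ltac:(lia)). lra.
Qed.

Lemma xbar_pos n l i : 0 < xbar n l i.
Proof.
  destruct (Nat.lt_ge_cases i l).
  - rewrite xbar_lt by auto. apply Rinv_0_lt_compat, sylv_pos.
  - rewrite xbar_ge by auto. apply plateau_pos.
Qed.

Lemma xbar_le1 n l i : xbar n l i <= 1.
Proof.
  destruct (Nat.lt_ge_cases i l).
  - rewrite xbar_lt by auto. pose proof (sylv_ge2 i).
    rewrite <- Rinv_1. apply Rinv_le_contravar; lra.
  - rewrite xbar_ge by auto. apply plateau_le1.
Qed.

Lemma xbar_decr n l i : (1 <= l)%nat -> (1 <= i)%nat -> xbar n l (S i) <= xbar n l i.
Proof.
  intros Hl Hi. pose proof (sylv_prod_ge1 (i - 1)).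
  destruct (Nat.lt_ge_cases (S i) l).
  - rewrite !xbar_lt by lia. apply Rinv_le_contravar; [apply sylv_pos|].
    rewrite sylv_S. unfold sylv.
    pose proof (sylv_prod_mono (i - 1) i ltac:(lia)). lra.
  - destruct (Nat.eq_dec (S i) l) as [<-|].
    + rewrite xbar_ge, xbar_lt by lia. unfold plateau.
      apply Rinv_le_contravar; [apply sylv_pos|].
      replace (S i - 1)%nat with (S (i - 1)) by lia. rewrite sylv_prod_S. unfold sylv.
      pose proof (INR_ge1 (n - S i + 1) ltac:(lia)). nra.
    + rewrite !xbar_ge by lia. lra.
Qed.

Lemma xbar_suffix_le n l m : (1 <= m <= l)%nat -> (l <= n)%nat ->
  rsum (xbar n l) m (S n - m) = / sylv_prod (m - 1).
Proof.
  intros Hm Hl. replace (S n - m)%nat with ((l - m) + (S n - l))%nat by lia.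
  rewrite rsum_split.
  rewrite (rsum_ext (xbar n l) (fun i => / sylv i)) by (intros; apply xbar_lt; lia).
  rewrite (rsum_ext (xbar n l) (fun _ => plateau n l)) by (intros; apply xbar_ge; lia).
  replace m with (S (m - 1)) at 1 by lia. rewrite sum_inv_sylv, rsum_const.
  replace (m - 1 + (l - m))%nat with (l - 1)%nat by lia.
  replace (S n - l)%nat with (n - l + 1)%nat by lia. unfold plateau.
  assert (0 < INR (n - l + 1)) by (apply lt_0_INR; lia).
  pose proof (sylv_prod_pos (l - 1)). pose proof (sylv_prod_pos (m - 1)).
  field. repeat split; lra.
Qed.

Lemma xbar_suffix_gt n l m : (l < m)%nat ->
  rsum (xbar n l) m (S n - m) = INR (S n - m) * plateau n l.
Proof.
  intro H. rewrite (rsum_ext (xbar n l) (fun _ => plateau n l))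
    by (intros; apply xbar_ge; lia).
  apply rsum_const.
Qed.

(** The points [xbar n l] are feasible; the prefix constraints hold with
    equality before the plateau. *)
Lemma in_X_xbar n l : (1 <= l <= n)%nat -> in_X n (xbar n l).
Proof.
  intros Hl. unfold in_X, sum_range, prod_range. repeat split.
  - rewrite xbar_suffix_le by lia. simpl. apply Rinv_1.
  - apply xbar_le1.
  - intros i Hi. apply xbar_decr; lia.
  - left; apply xbar_pos.
  - intros j Hj. replace (S j - 1)%nat with j by lia.
    destruct (Nat.le_gt_cases (S j) l).
    + rewrite xbar_suffix_le by lia.
      rewrite (rprod_ext _ (fun i => / sylv i)) by (intros; apply xbar_lt; lia).
      rewrite prod_inv_sylv. replace (S j - 1)%nat with j by lia. lra.
    + rewrite xbar_suffix_gt by lia.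
      replace j with (S (j - 1)) at 1 by lia. rewrite rprod_last.
      replace (1 + (j - 1))%nat with j by lia. rewrite xbar_ge by lia.
      assert (0 <= rprod (xbar n l) 1 (j - 1) <= 1).
      { apply rprod_01. intros; split; [left; apply xbar_pos | apply xbar_le1]. }
      pose proof (plateau_pos n l). pose proof (INR_ge1 (S n - S j) ltac:(lia)).
      nra.
Qed.

(** ** The feasible set and the tail bound *)

Lemma last_index_ge1 (g : nat -> R) k : 1 <= g 0%nat ->
  exists j, (j <= k)%nat /\ 1 <= g j /\ forall m, (j < m <= k)%nat -> g m < 1.
Proof.
  intro H0. induction k as [|k IH].
  - exists 0%nat. repeat split; auto; intros; lia.
  - destruct (Rle_lt_dec 1 (g (S k))) as [Hk|Hk].
    + exists (S k). repeat split; auto; intros; lia.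
    + destruct IH as [j [H1 [H2 H3]]]. exists j. repeat split; auto.
      intros m Hm. destruct (Nat.eq_dec m (S k)) as [->|]; auto. apply H3; lia.
Qed.

Section FeasibleSet.
Variables (n : nat) (x : nat -> R).
Hypothesis Hn : (2 <= n)%nat.
Hypothesis HX : in_X n x.

Lemma X_sum : rsum x 1 n = 1.
Proof.
  destruct HX as [H _]. unfold sum_range in H.
  now replace (S n - 1)%nat with n in H by lia.
Qed.

Lemma X_decr i j : (1 <= i)%nat -> (i <= j <= n)%nat -> x j <= x i.
Proof.
  intros H1 [H2 H3]. destruct HX as [_ [_ [Hd _]]].
  induction H2 as [|m Hm IH]; [lra|].
  assert (x (S m) <= x m) by (apply Hd; lia). specialize (IH ltac:(lia)). lra.
Qed.

Lemma X_nonneg i : (1 <= i <= n)%nat -> 0 <= x i.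
Proof.
  intro H. destruct HX as [_ [_ [_ [H0 _]]]].
  pose proof (X_decr i n ltac:(lia) ltac:(lia)). lra.
Qed.

Lemma X_prefix j : (1 <= j <= n - 1)%nat -> rprod x 1 j <= rsum x (S j) (n - j).
Proof.
  intro H. destruct HX as [_ [_ [_ [_ H0]]]]. specialize (H0 j H).
  unfold prod_range, sum_range in H0.
  now replace (S j - 1)%nat with j in H0 by lia.
Qed.

Lemma X_suffix_le_first m : (1 <= m <= n)%nat ->
  rsum x m (S n - m) <= INR (S n - m) * x m.
Proof.
  intro Hm. apply rsum_bounds with (lo := 0).
  intros i Hi. split; [apply X_nonneg | apply X_decr]; lia.
Qed.

(** All coordinates of a feasible point are positive: [x_1 > 0] because the
    coordinates sum to 1, and [x_(i+1) > 0] because [x_1 ... x_i > 0] bounds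
    [x_(i+1) + ... + x_n <= (n-i) x_(i+1)] from below. *)
Lemma X_pos i : (1 <= i <= n)%nat -> 0 < x i.
Proof.
  enough (H : forall k, (k <= n)%nat -> forall i, (1 <= i <= k)%nat -> 0 < x i)
    by (intros Hi; apply (H n); lia).
  induction k as [|k IH]; intros Hk j Hj; [lia|].
  destruct (Nat.eq_dec j (S k)) as [->|]; [|apply IH; lia].
  destruct (Rle_lt_dec (x (S k)) 0) as [Hle|]; auto. exfalso.
  assert (Hsuf := X_suffix_le_first (S k) ltac:(lia)).
  assert (0 <= INR (S n - S k)) by apply pos_INR.
  destruct (Nat.eq_dec k 0) as [->|Hk0].
  - replace (S n - 1)%nat with n in * by lia. rewrite X_sum in Hsuf. nra.
  - assert (Hp : 0 < rprod x 1 k) by (apply rprod_pos; intros; apply IH; lia).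
    pose proof (X_prefix k ltac:(lia)) as Hc.
    replace (n - k)%nat with (S n - S k)%nat in Hc by lia. nra.
Qed.

(** Let [j <= k] be
    the last index with [x_1 ... x_j s_1 ... s_j >= 1].  The constraint at [j]
    gives the bound for the tail from [j+1]; between [j+1] and [k] the point
    [x] is log-majorized by [1/s_i], so [x_(j+1) + ... + x_k] is at most
    [sum_(i=j+1)^k 1/s_i = 1/(s_1...s_j) - 1/(s_1...s_k)]. *)
Lemma tail_bound k : (k <= n - 1)%nat -> / sylv_prod k <= rsum x (S k) (n - k).
Proof.
  intros Hk.
  destruct (last_index_ge1 (fun m => rprod x 1 m * sylv_prod m) k
              ltac:(simpl; lra)) as [j [Hjk [Hj Hlast]]].
  assert (Hpos : forall i, (1 <= i <= n)%nat -> 0 < x i) by exact X_pos.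
  assert (Hpj : 0 < rprod x 1 j) by (apply rprod_pos; intros; apply Hpos; lia).
  assert (Htail_j : / sylv_prod j <= rsum x (S j) (n - j)).
  { destruct (Nat.eq_dec j 0) as [->|]; [simpl; rewrite Nat.sub_0_r, X_sum; lra|].
    pose proof (X_prefix j ltac:(lia)). pose proof (sylv_prod_pos j).
    assert (/ sylv_prod j <= rprod x 1 j).
    { apply (Rmult_le_reg_r (sylv_prod j)); auto. rewrite Rinv_l; lra. }
    lra. }
  replace (n - j)%nat with ((k - j) + (n - k))%nat in Htail_j by lia.
  rewrite rsum_split in Htail_j. replace (S j + (k - j))%nat with (S k) in Htail_j by lia.
  assert (Hmid : rsum x (S j) (k - j) <= rsum (fun i => / sylv i) (S j) (k - j)).
  { apply log_majorization_sum.
    - intros i Hi. split; [apply Hpos; lia | apply Rinv_0_lt_compat, sylv_pos].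
    - intros i Hi1 Hi2. apply X_decr; lia.
    - intros m Hm. rewrite rsum_minus, sum_ln_inv_sylv.
      rewrite <- ln_rprod by (intros; apply Hpos; lia).
      assert (Hpm : 0 < rprod x (S j) m) by (apply rprod_pos; intros; apply Hpos; lia).
      assert (E : rprod x 1 (j + m) = rprod x 1 j * rprod x (S j) m)
        by (rewrite rprod_split; now replace (1 + j)%nat with (S j) by lia).
      assert (Hcmp : ln (rprod x 1 (j + m) * sylv_prod (j + m))
                     <= ln (rprod x 1 j * sylv_prod j)).
      { apply ln_le.
        - rewrite E. pose proof (sylv_prod_pos (j + m)).
          apply Rmult_lt_0_compat; [apply Rmult_lt_0_compat|]; auto.
        - destruct (Nat.eq_dec m 0) as [->|]; [rewrite Nat.add_0_r; lra|].
          specialize (Hlast (j + m)%nat ltac:(lia)). simpl in Hlast. lra. }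
      rewrite E, !ln_mult in Hcmp by (auto using sylv_prod_pos, Rmult_lt_0_compat).
      lra. }
  rewrite sum_inv_sylv in Hmid. replace (j + (k - j))%nat with k in Hmid by lia. lra.
Qed.

Lemma suffix_bound m : (1 <= m <= n)%nat -> / sylv_prod (m - 1) <= rsum x m (S n - m).
Proof.
  intros H. replace m with (S (m - 1)) at 2 by lia.
  replace (S n - m)%nat with (n - (m - 1))%nat by lia. apply tail_bound. lia.
Qed.

End FeasibleSet.

Definition logval (n a b l : nat) : R := rsum (fun i => ln (xbar n l i)) a (S b - a).

Lemma minimizer_logval_le n a b l l' : (1 <= l' <= n)%nat ->
  is_minimizer n a b (xbar n l) -> logval n a b l <= logval n a b l'.
Proof.
  intros Hl' [_ Hmin]. specialize (Hmin (xbar n l') (in_X_xbar n l' Hl')).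
  unfold logval. apply rprod_le_iff_ln; auto. intros; split; apply xbar_pos.
Qed.

Lemma minimizer_of_logval_le n a b l : (2 <= n)%nat -> (1 <= a)%nat -> (b <= n)%nat ->
  (1 <= l <= n)%nat ->
  (forall y, in_X n y -> logval n a b l <= rsum (fun i => ln (y i)) a (S b - a)) ->
  is_minimizer n a b (xbar n l).
Proof.
  intros Hn Ha Hb Hl Hbound. split; [now apply in_X_xbar|]. intros y Hy.
  apply rprod_le_iff_ln; [|apply Hbound; auto].
  intros i Hi. split; [apply xbar_pos | apply (X_pos n y); auto; lia].
Qed.

(** Part (a): [y_b] is at least [1/(n-b+1)] times the tail [y_b + ... + y_n],
    which the tail bound bounds below by [(n-b+1) c(n,b)]. *)
Lemma part_a n b : (2 <= n)%nat -> (1 <= b <= n)%nat -> is_minimizer n b b (xbar n b).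
Proof.
  intros Hn Hb. split; [now apply in_X_xbar|]. intros y Hy.
  unfold prod_range. replace (S b - b)%nat with 1%nat by lia. simpl.
  rewrite !Rmult_1_r, xbar_ge by lia.
  pose proof (suffix_bound n y Hn Hy b Hb) as Htail.
  pose proof (X_suffix_le_first n y Hn Hy b Hb) as Hfirst.
  unfold plateau. replace (n - b + 1)%nat with (S n - b)%nat by lia.
  assert (0 < INR (S n - b)) by (apply lt_0_INR; lia).
  pose proof (sylv_prod_pos (b - 1)).
  rewrite Rinv_mult. apply (Rmult_le_reg_l (INR (S n - b))); auto.
  rewrite <- Rmult_assoc, Rinv_r by lra. lra.
Qed.

Section FullSuffix.
Variables (n a : nat).
Hypothesis Hn : (4 <= n)%nat.
Hypothesis Ha : (1 <= a <= n)%nat.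

(** By the tail bound every feasible [y] suffix-majorizes [xbar n n] on
    [a .. n]: hence [x_a ... x_n] is smallest at [xbar n n], and only there. *)
Lemma xbar_last_suffix_majorization y : in_X n y ->
  logval n a n n <= rsum (fun i => ln (y i)) a (S n - a) /\
  (rsum (fun i => ln (y i)) a (S n - a) <= logval n a n n ->
   forall i, (a <= i <= n)%nat -> y i = xbar n n i).
Proof.
  intros Hy. unfold logval.
  assert (Hpos : forall i, (a <= i < a + (S n - a))%nat -> 0 < y i /\ 0 < xbar n n i)
    by (intros i Hi; split; [apply (X_pos n y); auto; lia | apply xbar_pos]).
  assert (Hdecr : forall i, (a <= i)%nat -> (S i < a + (S n - a))%nat -> y (S i) <= y i)
    by (intros i H1 H2; apply (X_decr n y); auto; lia).
  assert (Hsuf : forall m, (a <= m <= a + (S n - a))%nat ->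
     rsum (xbar n n) m (a + (S n - a) - m) <= rsum y m (a + (S n - a) - m)).
  { intros m Hm. replace (a + (S n - a) - m)%nat with (S n - m)%nat by lia.
    destruct (Nat.eq_dec m (S n)) as [->|]; [rewrite Nat.sub_diag; simpl; lra|].
    rewrite xbar_suffix_le by lia. apply (suffix_bound n y); auto; lia. }
  split; [now apply suffix_majorization_log|].
  intros Heq i Hi. apply (suffix_majorization_eq y (xbar n n) a (S n - a)); auto; lia.
Qed.

Lemma xbar_last_minimizer : is_minimizer n a n (xbar n n).
Proof.
  apply minimizer_of_logval_le; try lia.
  intros y Hy. apply (xbar_last_suffix_majorization y Hy).
Qed.

Lemma xbar_last_unique y : in_X n y -> prod_range y a n <= prod_range (xbar n n) a n ->
  forall i, (a <= i <= n)%nat -> y i = xbar n n i.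
Proof.
  intros Hy Hle. apply (xbar_last_suffix_majorization y Hy).
  unfold prod_range in Hle.
  apply rprod_le_iff_ln in Hle; auto.
  intros i Hi. split; [apply (X_pos n y); auto; lia | apply xbar_pos].
Qed.

End FullSuffix.

Lemma part_c n : (4 <= n)%nat ->
  is_minimizer n 1 n (xbar n n) /\
  forall y, is_minimizer n 1 n y -> forall i, (1 <= i <= n)%nat -> y i = xbar n n i.
Proof.
  intros Hn. split; [apply xbar_last_minimizer; lia|].
  intros y [Hy Hmin] i Hi. apply (xbar_last_unique n 1); auto; try lia.
  apply Hmin, in_X_xbar. lia.
Qed.

(** Part (d): [xbar n l] minimizes [x_a ... x_n] only if it coincides with
    [xbar n n] at [n], which forces [l = n] since plateau values decrease. *)
Lemma part_d n a l : (4 <= n)%nat -> (1 <= a <= n)%nat -> (1 <= l <= n)%nat ->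
  (is_minimizer n a n (xbar n l) <-> l = n).
Proof.
  intros Hn Ha Hl. split; [|intros ->; now apply xbar_last_minimizer].
  intros [_ Hmin]. specialize (Hmin (xbar n n) (in_X_xbar n n ltac:(lia))).
  pose proof (xbar_last_unique n a Hn Ha (xbar n l) (in_X_xbar n l Hl) Hmin n
                ltac:(lia)) as Hlast.
  rewrite !xbar_ge in Hlast by lia.
  destruct (Nat.eq_dec l n); auto.
  pose proof (plateau_decr_lt n l n ltac:(lia) ltac:(lia) ltac:(lia)). lra.
Qed.

(** ** Comparing the points [xbar n l] with each other *)

Lemma logval_split n a b l : (a <= l <= S b)%nat ->
  logval n a b l =
  rsum (fun i => ln (/ sylv i)) a (l - a) + INR (S b - l) * ln (plateau n l).
Proof.
  intros Hl. unfold logval. replace (S b - a)%nat with ((l - a) + (S b - l))%nat by lia.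
  rewrite rsum_split. f_equal.
  - apply rsum_ext. intros. now rewrite xbar_lt by lia.
  - rewrite (rsum_ext _ (fun _ => ln (plateau n l))); [apply rsum_const|].
    intros. now rewrite xbar_ge by lia.
Qed.

Lemma logval_plateau n a b l : (l <= a)%nat ->
  logval n a b l = INR (S b - a) * ln (plateau n l).
Proof.
  intros Hl. unfold logval. rewrite (rsum_ext _ (fun _ => ln (plateau n l)));
    [apply rsum_const|].
  intros. now rewrite xbar_ge by lia.
Qed.

(** While the plateau starts before the range, moving it right decreases
    the objective (the plateau value decreases). *)
Lemma logval_plateau_lt n a b l l' : (3 <= n)%nat -> (1 <= l)%nat ->
  (l < l' <= a)%nat -> (a <= b)%nat -> (l' <= n)%nat ->
  logval n a b l' < logval n a b l.
Proof.
  intros Hn Hl Hll' Hab Hl'n. rewrite !logval_plateau by lia.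
  assert (0 < INR (S b - a)) by (apply lt_0_INR; lia).
  assert (plateau n l' < plateau n l) by (apply plateau_decr_lt; lia).
  assert (ln (plateau n l') < ln (plateau n l))
    by (apply ln_increasing; auto using plateau_pos).
  nra.
Qed.

(** A plateau starting after the range end [b] is beaten by the plateau
    starting at [b], whose value is below [1/s_b]. *)
Lemma logval_beyond_lt n a b l : (4 <= n)%nat -> (1 <= a <= b)%nat -> (b < n)%nat ->
  (b < l)%nat -> logval n a b b < logval n a b l.
Proof.
  intros Hn Hab Hbn Hl. rewrite (logval_split n a b b) by lia. unfold logval.
  rewrite (rsum_ext (fun i => ln (xbar n l i)) (fun i => ln (/ sylv i)))
    by (intros; now rewrite xbar_lt by lia).
  replace (S b - a)%nat with (S (b - a)) by lia. rewrite rsum_last.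
  replace (S b - b)%nat with 1%nat by lia. replace (a + (b - a))%nat with b by lia.
  assert (ln (plateau n b) < ln (/ sylv b)).
  { apply ln_increasing; [apply plateau_pos|]. unfold plateau, sylv.
    pose proof (INR_ge1 (n - b) ltac:(lia)). rewrite plus_INR. simpl (INR 1).
    pose proof (sylv_prod_ge1 (b - 1)).
    apply Rinv_lt_contravar; [nra|].
    destruct (Nat.eq_dec b 1) as [->|].
    - simpl. pose proof (INR_ge3 (n - 1) ltac:(lia)). lra.
    - pose proof (sylv_prod_ge2 (b - 1) ltac:(lia)). nra. }
  simpl INR. lra.
Qed.

Lemma logval_step n a b l : (1 <= l)%nat -> (a <= l <= b)%nat -> (S l < n)%nat ->
  let d := INR (n - l) in let j := (b - l)%nat in let p := sylv_prod (l - 1) in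
  logval n a b (S l) - logval n a b l =
  ln ((d + 1) ^ (S j) * p) - ln ((p + 1) ^ (S j) * d ^ j).
Proof.
  intros Hl Hab Hn d j p.
  rewrite (logval_split n a b (S l)), (logval_split n a b l) by lia.
  replace (S l - a)%nat with (S (l - a)) by lia. rewrite rsum_last.
  replace (a + (l - a))%nat with l by lia.
  replace (S b - S l)%nat with j by (unfold j; lia).
  replace (S b - l)%nat with (S j) by (unfold j; lia).
  rewrite plateau_succ by lia. unfold plateau.
  replace (n - l + 1)%nat with (S (n - l)) by lia.
  assert (Es : sylv l = p + 1) by reflexivity.
  assert (Ep : sylv_prod l = p * (p + 1))
    by (unfold p; rewrite <- sylv_prod_S; f_equal; lia).
  replace (INR (S (n - l))) with (d + 1) by (unfold d; now rewrite S_INR).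
  rewrite Es, Ep. fold p d.
  assert (Hp : 1 <= p) by apply sylv_prod_ge1.
  assert (Hd : 1 <= d) by (apply INR_ge1; lia).
  rewrite !ln_Rinv, !ln_mult, !ln_pow by
    (repeat apply Rmult_lt_0_compat; try apply pow_lt; lra).
  rewrite S_INR. ring.
Qed.

Lemma logval_step_le n a b l : (1 <= l)%nat -> (a <= l <= b)%nat -> (S l < n)%nat ->
  let d := INR (n - l) in let j := (b - l)%nat in let p := sylv_prod (l - 1) in
  (d + 1) ^ (S j) * p <= (p + 1) ^ (S j) * d ^ j ->
  logval n a b (S l) <= logval n a b l.
Proof.
  intros Hl Hab Hn d j p H. pose proof (logval_step n a b l Hl Hab Hn) as E.
  cbv zeta in E. fold d j p in E.
  assert (1 <= p) by apply sylv_prod_ge1. assert (1 <= d) by (apply INR_ge1; lia).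
  assert (HP : 0 < (d + 1) ^ (S j) * p)
    by (apply Rmult_lt_0_compat; [apply pow_lt|]; lra).
  pose proof (ln_le _ _ HP H). lra.
Qed.

Lemma logval_step_lt n a b l : (1 <= l)%nat -> (a <= l <= b)%nat -> (S l < n)%nat ->
  let d := INR (n - l) in let j := (b - l)%nat in let p := sylv_prod (l - 1) in
  (d + 1) ^ (S j) * p < (p + 1) ^ (S j) * d ^ j ->
  logval n a b (S l) < logval n a b l.
Proof.
  intros Hl Hab Hn d j p H. pose proof (logval_step n a b l Hl Hab Hn) as E.
  cbv zeta in E. fold d j p in E.
  assert (1 <= p) by apply sylv_prod_ge1. assert (1 <= d) by (apply INR_ge1; lia).
  assert (HP : 0 < (d + 1) ^ (S j) * p)
    by (apply Rmult_lt_0_compat; [apply pow_lt|]; lra).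
  pose proof (ln_increasing _ _ HP H). lra.
Qed.

Lemma pow2_mul_le k p : (2 <= k)%nat -> 1 <= p -> 2 ^ k * p <= (p + 1) ^ k.
Proof.
  intros Hk Hp. induction Hk as [|k Hk IH]; [simpl; nra|].
  simpl. assert (0 <= 2 ^ k) by (apply pow_le; lra).
  assert (0 < (p + 1) ^ k) by (apply pow_lt; lra). nra.
Qed.

Lemma INR_lt_three_halves_pow k : (3 <= k)%nat -> INR k < (3 / 2) ^ k.
Proof.
  intros Hk. induction Hk as [|k Hk IH]; [simpl; lra|].
  rewrite S_INR. simpl. pose proof (INR_ge3 k Hk). nra.
Qed.

Lemma succ_pow_lt_double_pow k : (3 <= k)%nat ->
  (INR k + 1) ^ k * INR k < (2 * INR k) ^ k.
Proof.
  intros Hk. pose proof (INR_ge3 k Hk).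
  assert (H1 : (3 / 2 * (INR k + 1)) ^ k <= (2 * INR k) ^ k) by (apply pow_incr; lra).
  rewrite Rpow_mult_distr in H1. pose proof (INR_lt_three_halves_pow k Hk).
  assert (0 < (INR k + 1) ^ k) by (apply pow_lt; lra). nra.
Qed.

(** The step inequality when the plateau reaches the end of the range
    ([d = j + 1]), for [j >= 2]. *)
Lemma diag_step_ineq j p : (2 <= j)%nat -> 1 <= p ->
  (INR (S j) + 1) ^ (S j) * p < (p + 1) ^ (S j) * INR (S j) ^ j.
Proof.
  intros Hj Hp. set (k := INR (S j)).
  pose proof (succ_pow_lt_double_pow (S j) ltac:(lia)) as H. fold k in H.
  pose proof (pow2_mul_le (S j) p ltac:(lia) Hp) as H2.
  assert (Hk : 3 <= k) by (apply INR_ge3; lia).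
  rewrite Rpow_mult_distr in H. replace (k ^ S j) with (k ^ j * k) in H by (simpl; ring).
  assert (0 < k ^ j) by (apply pow_lt; lra).
  assert (0 < 2 ^ S j) by (apply pow_lt; lra).
  apply (Rmult_lt_reg_r k); [lra|].
  assert ((k + 1) ^ S j * p * k < 2 ^ S j * (k ^ j * k) * p) by nra.
  assert (2 ^ S j * p * (k ^ j * k) <= (p + 1) ^ S j * (k ^ j * k))
    by (apply Rmult_le_compat_r; nra).
  nra.
Qed.

Lemma far_step_ineq d j p : 1 <= p -> 1 <= d -> (1 <= j)%nat ->
  (d + 1) ^ 2 <= (p + 1) * d ->
  (d + 1) ^ (S j) * p < (p + 1) ^ (S j) * d ^ j.
Proof.
  intros Hp Hd Hj H.
  assert (H1 : ((d + 1) ^ 2) ^ j <= ((p + 1) * d) ^ j)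
    by (apply pow_incr; split; [apply pow_le; lra | exact H]).
  rewrite <- pow_mult, Rpow_mult_distr in H1.
  assert (H2 : (d + 1) ^ (S j) <= (d + 1) ^ (2 * j)) by (apply Rle_pow; lia || lra).
  simpl ((p + 1) ^ S j). assert (0 < (d + 1) ^ S j) by (apply pow_lt; lra).
  assert (0 < (p + 1) ^ j * d ^ j) by (apply Rmult_lt_0_compat; apply pow_lt; lra).
  nra.
Qed.

Lemma nonincr_chain (f : nat -> R) lo hi :
  (forall l, (lo <= l < hi)%nat -> f (S l) <= f l) ->
  forall l, (lo <= l <= hi)%nat -> f hi <= f l.
Proof.
  intros Hstep l Hl. remember (hi - l)%nat as k eqn:Hk. revert l Hl Hk.
  induction k as [|k IH]; intros l Hl Hk; [replace l with hi by lia; lra|].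
  pose proof (IH (S l) ltac:(lia) ltac:(lia)). pose proof (Hstep l ltac:(lia)). lra.
Qed.

Section LastButOne.
Variables (n a : nat).
Hypothesis Hn : (4 <= n)%nat.
Hypothesis Ha : (1 <= a <= n - 1)%nat.

Lemma logval_e_step l : (a <= l <= n - 2)%nat ->
  logval n a (n - 1) (S l) <= logval n a (n - 1) l /\
  (~ (n = 4%nat /\ l = 2%nat) -> logval n a (n - 1) (S l) < logval n a (n - 1) l).
Proof.
  intros Hl. assert (Hp : 1 <= sylv_prod (l - 1)) by apply sylv_prod_ge1.
  destruct (Nat.eq_dec l (n - 2)) as [El|Hl2].
  - (* Here [d = 2], [j = 1]: the step inequality reads [9p <= 2(p+1)^2], i.e.
       [(2p-1)(p-2) >= 0]; it is strict unless [p = s_1...s_(l-1) = 2], i.e. [l = 2]. *)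
    assert (Hp2 : 2 <= sylv_prod (l - 1)) by (apply sylv_prod_ge2; lia).
    split.
    + apply logval_step_le; try lia. cbv zeta.
      replace (n - l)%nat with 2%nat by lia. replace (n - 1 - l)%nat with 1%nat by lia.
      simpl. nra.
    + intros Hne. apply logval_step_lt; try lia. cbv zeta.
      replace (n - l)%nat with 2%nat by lia. replace (n - 1 - l)%nat with 1%nat by lia.
      assert (6 <= sylv_prod (l - 1)) by (apply sylv_prod_ge6; lia).
      simpl. nra.
  - assert (Hlt : logval n a (n - 1) (S l) < logval n a (n - 1) l).
    { apply logval_step_lt; try lia. cbv zeta.
      replace (n - l)%nat with (S (n - 1 - l)) by lia.
      apply diag_step_ineq; [lia | exact Hp]. }
    split; [lra | auto].
Qed.

Lemma logval_e_min l : (1 <= l <= n)%nat ->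
  logval n a (n - 1) (n - 1) <= logval n a (n - 1) l /\
  (logval n a (n - 1) l <= logval n a (n - 1) (n - 1) ->
   l = (n - 1)%nat \/ (n = 4%nat /\ (a <= 2)%nat /\ l = 2%nat)).
Proof.
  intros Hl.
  assert (Hchain : forall l, (a <= l <= n - 1)%nat ->
            logval n a (n - 1) (n - 1) <= logval n a (n - 1) l).
  { apply nonincr_chain. intros k Hk. apply logval_e_step. lia. }
  destruct (Nat.eq_dec l n) as [->|Hln].
  { pose proof (logval_beyond_lt n a (n - 1) n ltac:(lia) ltac:(lia) ltac:(lia) ltac:(lia)).
    split; intros; lra. }
  destruct (Nat.lt_ge_cases l a) as [Hla|Hal].
  { pose proof (logval_plateau_lt n a (n - 1) l a ltac:(lia) ltac:(lia) ltac:(lia)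
                  ltac:(lia) ltac:(lia)).
    pose proof (Hchain a ltac:(lia)). split; intros; lra. }
  split; [apply Hchain; lia|]. intros Hle.
  destruct (Nat.eq_dec l (n - 1)) as [|Hl1]; [now left|]. right.
  destruct (Nat.eq_dec n 4), (Nat.eq_dec l 2); try lia.
  all: exfalso; destruct (logval_e_step l ltac:(lia)) as [_ Hlt].
  all: pose proof (Hchain (S l) ltac:(lia)); specialize (Hlt ltac:(lia)); lra.
Qed.

End LastButOne.

(** ** Part (e): minimality of [xbar n (n-1)] over all of X^n *)

Lemma discrete_ivt (c : nat -> R) t K : forall l0, t <= c l0 -> c (l0 + S K)%nat <= t ->
  exists l, (l0 <= l <= l0 + K)%nat /\ c (S l) <= t <= c l.
Proof.
  induction K as [|K IH]; intros l0 H1 H2.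
  - exists l0. rewrite Nat.add_1_r in H2. split; [lia | lra].
  - destruct (Rle_lt_dec (c (S l0)) t).
    + exists l0. split; [lia | lra].
    + destruct (IH (S l0) ltac:(lra)) as [l [Hl Hc]].
      { now replace (S l0 + S K)%nat with (l0 + S (S K))%nat by lia. }
      exists l. split; [lia | exact Hc].
Qed.

Definition xbar_mix (n l : nat) (lam : R) (i : nat) : R :=
  lam * xbar n (S l) i + (1 - lam) * xbar n l i.

(** If the mixture has the same last coordinate as a feasible [y], then [y]
    suffix-majorizes it: before the plateau by the tail bound, on the plateau
    because the coordinates of [y] are at least [y_n]. *)
Lemma xbar_mix_suffix_le n l lam y m : (2 <= n)%nat -> (1 <= l < n)%nat -> in_X n y ->
  0 <= lam <= 1 -> y n = lam * plateau n (S l) + (1 - lam) * plateau n l ->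
  (1 <= m <= n)%nat -> rsum (xbar_mix n l lam) m (S n - m) <= rsum y m (S n - m).
Proof.
  intros Hn Hl Hy Hlam Hyn Hm. unfold xbar_mix. rewrite rsum_plus, !rsum_scal.
  destruct (Nat.le_gt_cases m l).
  - rewrite !xbar_suffix_le by lia. pose proof (suffix_bound n y Hn Hy m Hm). nra.
  - assert (Hplateau : lam * rsum (xbar n (S l)) m (S n - m)
                       + (1 - lam) * rsum (xbar n l) m (S n - m) = INR (S n - m) * y n).
    { rewrite (xbar_suffix_gt n l m), Hyn by lia.
      destruct (Nat.eq_dec m (S l)) as [->|].
      - rewrite xbar_suffix_le, plateau_succ by lia.
        replace (S n - S l)%nat with (n - l)%nat by lia. replace (S l - 1)%nat with l by lia.
        assert (0 < INR (n - l)) by (apply lt_0_INR; lia). pose proof (sylv_prod_pos l).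
        field. lra.
      - rewrite (xbar_suffix_gt n (S l) m) by lia. ring. }
    rewrite Hplateau.
    apply (rsum_bounds y m (S n - m) (y n) (y m)).
    intros i Hi. split; apply (X_decr n y); auto; lia.
Qed.

(** The last coordinate of a feasible point lies between the plateau values
    [c(n,n) = 1/(s_1...s_(n-1))] and [c(n,1) = 1/n], hence is a convex
    combination of two consecutive plateau values. *)
Lemma last_coord_plateau_mix n y : (3 <= n)%nat -> in_X n y ->
  exists l lam, (1 <= l <= n - 1)%nat /\ 0 <= lam <= 1 /\
    y n = lam * plateau n (S l) + (1 - lam) * plateau n l.
Proof.
  intros Hn Hy. assert (Hn2 : (2 <= n)%nat) by lia. set (t := y n).
  assert (Hupper : t <= plateau n 1).
  { unfold plateau. replace (n - 1 + 1)%nat with n by lia. simpl sylv_prod.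
    rewrite Rmult_1_r. pose proof (X_sum n y Hn2 Hy) as Hsum.
    pose proof (rsum_bounds y 1 n (y n) (y 1%nat)) as [Hlow _].
    { intros i Hi. split; apply (X_decr n y); auto; lia. }
    assert (0 < INR n) by (apply lt_0_INR; lia).
    apply (Rmult_le_reg_l (INR n)); auto. rewrite Rinv_r by lra. unfold t. lra. }
  assert (Hlower : plateau n (1 + S (n - 2)) <= t).
  { replace (1 + S (n - 2))%nat with n by lia. rewrite plateau_last by lia.
    pose proof (suffix_bound n y Hn2 Hy n ltac:(lia)) as Hb.
    replace (S n - n)%nat with 1%nat in Hb by lia. simpl in Hb. unfold t. lra. }
  destruct (discrete_ivt (plateau n) t (n - 2) 1%nat Hupper Hlower)
    as [l [Hl [Hc1 Hc2]]].
  assert (Hd : plateau n (S l) < plateau n l) by (apply plateau_decr; lia).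
  exists l, ((plateau n l - t) / (plateau n l - plateau n (S l))).
  split; [lia|]. split; [split|].
  - unfold Rdiv. apply Rmult_le_pos; [lra | left; apply Rinv_0_lt_compat; lra].
  - apply (Rmult_le_reg_r (plateau n l - plateau n (S l))); [lra|].
    unfold Rdiv. rewrite Rmult_assoc, Rinv_l by lra. lra.
  - unfold t. field. lra.
Qed.

Section PartE.
Variables (n a : nat).
Hypothesis Hn : (4 <= n)%nat.
Hypothesis Ha : (1 <= a <= n - 1)%nat.

(** Every feasible [y] has [ln (y_a ... y_(n-1)) >= logval n a (n-1) (n-1)]:
    choose [l] with [c(n,l+1) <= y_n <= c(n,l)] and the mixture of
    [xbar n (l+1)] and [xbar n l] with last coordinate [y_n]; [y]
    suffix-majorizes it, and by concavity of [ln] its objective is at least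
    the corresponding mixture of [logval]s, which are both [>= logval (n-1)]. *)
Lemma part_e_bound y : in_X n y ->
  logval n a (n - 1) (n - 1) <= rsum (fun i => ln (y i)) a (S (n - 1) - a).
Proof.
  intros Hy. assert (Hn2 : (2 <= n)%nat) by lia.
  destruct (last_coord_plateau_mix n y ltac:(lia) Hy) as [l [lam [Hl [Hlam Hyn]]]].
  set (z := xbar_mix n l lam).
  assert (Hzpos : forall i, 0 < z i).
  { intro i. unfold z, xbar_mix. pose proof (xbar_pos n (S l) i).
    pose proof (xbar_pos n l i). destruct (Req_dec lam 0) as [->|]; nra. }
  replace (S (n - 1) - a)%nat with (n - a)%nat by lia.
  assert (Hmaj : rsum (fun i => ln (z i)) a (n - a) <= rsum (fun i => ln (y i)) a (n - a)).
  { apply suffix_majorization_log.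
    - intros i Hi. split; [apply (X_pos n y); auto; lia | apply Hzpos].
    - intros i H1 H2. apply (X_decr n y); auto; lia.
    - intros m Hm. replace (a + (n - a) - m)%nat with (n - m)%nat by lia.
      destruct (Nat.eq_dec m n) as [->|]; [rewrite Nat.sub_diag; simpl; lra|].
      pose proof (xbar_mix_suffix_le n l lam y m Hn2 ltac:(lia) Hy Hlam Hyn ltac:(lia))
        as Hsuf.
      assert (Hzn : z n = y n) by (unfold z, xbar_mix; rewrite !xbar_ge by lia; auto).
      replace (S n - m)%nat with (S (n - m)) in Hsuf by lia.
      rewrite !rsum_last in Hsuf. replace (m + (n - m))%nat with n in Hsuf by lia.
      fold z in Hsuf. lra. }
  assert (Hconc : lam * logval n a (n - 1) (S l) + (1 - lam) * logval n a (n - 1) l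
                  <= rsum (fun i => ln (z i)) a (n - a)).
  { unfold logval. replace (S (n - 1) - a)%nat with (n - a)%nat by lia.
    rewrite <- !rsum_scal, <- rsum_plus. apply rsum_le. intros i Hi.
    apply ln_concave; auto using xbar_pos. }
  destruct (logval_e_min n a Hn Ha (S l) ltac:(lia)) as [V1 _].
  destruct (logval_e_min n a Hn Ha l ltac:(lia)) as [V2 _].
  nra.
Qed.

Lemma xbar_e_minimizer : is_minimizer n a (n - 1) (xbar n (n - 1)).
Proof. apply minimizer_of_logval_le; try lia. exact part_e_bound. Qed.

End PartE.

(** The tie for [n = 4]: [xbar 4 2 = (1/2, 1/6, 1/6, 1/6)] and
    [xbar 4 3 = (1/2, 1/3, 1/12, 1/12)] give the same [x_a x_2 x_3] for [a <= 2]. *)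
Lemma xbar_4_tie a : (a = 1%nat \/ a = 2%nat) ->
  prod_range (xbar 4 2) a 3 = prod_range (xbar 4 3) a 3.
Proof.
  intros [-> | ->]; unfold prod_range, xbar, sylv; simpl; field.
Qed.

Lemma part_e n a l : (4 <= n)%nat -> (1 <= a <= n - 1)%nat -> (1 <= l <= n)%nat ->
  (is_minimizer n a (n - 1) (xbar n l) <->
   l = (n - 1)%nat \/ (n = 4%nat /\ (a = 1%nat \/ a = 2%nat) /\ l = 2%nat)).
Proof.
  intros Hn Ha Hl. split.
  - intros Hmin. pose proof (minimizer_logval_le n a (n - 1) l (n - 1) ltac:(lia) Hmin).
    destruct (logval_e_min n a Hn Ha l Hl) as [_ Hcases].
    destruct (Hcases H) as [|[? [? ?]]]; [now left | right; repeat split; auto; lia].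
  - intros [-> | [-> [Ha12 ->]]]; [now apply xbar_e_minimizer|].
    split; [apply in_X_xbar; lia|]. intros y Hy. rewrite xbar_4_tie by auto.
    now apply (xbar_e_minimizer 4 a).
Qed.

(** ** Part (b): ranges ending before [n-1] *)

Lemma lt_pow2_of_log2_lt x k : 0 < x -> log2 x < INR k -> x < 2 ^ k.
Proof.
  intros Hx H. pose proof ln_lt_2.
  apply ln_lt_inv; [exact Hx | apply pow_lt; lra|]. rewrite ln_pow by lra.
  unfold log2 in H. apply (Rmult_lt_compat_r (ln 2)) in H; [|lra].
  unfold Rdiv in H. rewrite Rmult_assoc, Rinv_l in H by lra. lra.
Qed.

(** Beyond the logarithmic threshold of part (b), [s_l > n]: with
    [X = log2 n + log2 e > log2 n] we get [X < 2^(l-2)], hence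
    [n < 2^(2^(l-2)) <= s_1 ... s_(l-1) < s_l]. *)
Lemma n_lt_sylv_beyond_log_bound n l : (4 <= n)%nat ->
  2 + log2 (log2 (INR n) + log2 (exp 1)) < INR l -> (3 <= l)%nat /\ INR n < sylv l.
Proof.
  intros Hn H. pose proof ln_lt_2.
  assert (Hn4 : 4 <= INR n) by (replace 4 with (INR 4) by (simpl; lra); now apply le_INR).
  assert (Hlog2n : 1 < log2 (INR n)).
  { unfold log2. apply (Rmult_lt_reg_r (ln 2)); [lra|]. unfold Rdiv.
    rewrite Rmult_assoc, Rinv_l, Rmult_1_l, Rmult_1_r by lra.
    apply ln_increasing; lra. }
  assert (Hloge : 0 < log2 (exp 1))
    by (unfold log2; rewrite ln_exp; apply Rdiv_lt_0_compat; lra).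
  set (X := log2 (INR n) + log2 (exp 1)) in H.
  assert (HX : 0 < log2 X).
  { unfold log2 at 1. apply Rdiv_lt_0_compat; [|lra].
    rewrite <- ln_1. apply ln_increasing; unfold X; lra. }
  assert (Hl : (3 <= l)%nat).
  { destruct (Nat.le_gt_cases 3 l); auto.
    assert (INR l <= 2) by (replace 2 with (INR 2) by (simpl; lra); apply le_INR; lia).
    lra. }
  split; [exact Hl|].
  assert (HX2 : X < 2 ^ (l - 2)).
  { apply lt_pow2_of_log2_lt; [unfold X; lra|].
    rewrite minus_INR by lia. simpl (INR 2). lra. }
  assert (Hn2 : INR n < 2 ^ (2 ^ (l - 2))%nat).
  { apply lt_pow2_of_log2_lt; [lra|]. rewrite pow_INR. simpl (INR 2).
    replace (1 + 1) with 2 by ring. unfold X in HX2. lra. }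
  pose proof (sylv_prod_double_exp (l - 2)) as Hexp.
  replace (S (l - 2)) with (l - 1)%nat in Hexp by lia.
  unfold sylv. lra.
Qed.

Lemma logval_far_step n a b l : (a <= l < b)%nat -> (b < n - 1)%nat -> (3 <= l)%nat ->
  INR n < sylv l -> logval n a b (S l) < logval n a b l.
Proof.
  intros Hl Hb Hl3 Hs. apply logval_step_lt; try lia. cbv zeta.
  set (p := sylv_prod (l - 1)) in *. unfold sylv in Hs. fold p in Hs.
  assert (Hd : INR l + INR (n - l) = INR n) by (rewrite <- plus_INR; f_equal; lia).
  pose proof (INR_ge3 l Hl3). pose proof (INR_ge1 (n - l) ltac:(lia)).
  apply far_step_ineq; try lia; [apply sylv_prod_ge1 | lra | simpl; nra].
Qed.

(** Part (b): a plateau start [l <> b] outside [a .. threshold] can be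
    improved by moving it to [l+1] (if [l < a] or [l] is beyond the threshold)
    or to [b] (if [l > b]). *)
Lemma part_b n a b l : (4 <= n)%nat -> (1 <= a <= b)%nat -> (b < n - 1)%nat ->
  (1 <= l <= n)%nat -> is_minimizer n a b (xbar n l) ->
  ((a <= l)%nat /\ INR l <= 2 + log2 (log2 (INR n) + log2 (exp 1))) \/ l = b.
Proof.
  intros Hn Hab Hb Hl Hmin.
  destruct (Nat.eq_dec l b) as [|Hlb]; [now right|]. left.
  destruct (Nat.lt_ge_cases l a) as [Hla|Hal].
  { pose proof (logval_plateau_lt n a b l (S l) ltac:(lia) ltac:(lia) ltac:(lia)
                  ltac:(lia) ltac:(lia)).
    pose proof (minimizer_logval_le n a b l (S l) ltac:(lia) Hmin). lra. }
  destruct (Nat.lt_ge_cases b l) as [Hbl|Hlb'].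
  { pose proof (logval_beyond_lt n a b l Hn Hab ltac:(lia) Hbl).
    pose proof (minimizer_logval_le n a b l b ltac:(lia) Hmin). lra. }
  split; [exact Hal|]. apply Rnot_lt_le. intros Hbig.
  destruct (n_lt_sylv_beyond_log_bound n l Hn Hbig) as [Hl3 Hs].
  pose proof (logval_far_step n a b l ltac:(lia) Hb Hl3 Hs).
  pose proof (minimizer_logval_le n a b l (S l) ltac:(lia) Hmin). lra.
Qed.

Theorem mainTheorem13 (n a b l : nat) :
  (4 <= n)%nat -> (1 <= a)%nat -> (a <= b)%nat -> (b <= n)%nat ->
  (1 <= l <= n)%nat ->
  (* (a) *)
  (a = b -> is_minimizer n a b (xbar n b)) /\
  (* (b) *)
  ((b < n - 1)%nat -> is_minimizer n a b (xbar n l) ->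
     ((a <= l)%nat /\ INR l <= 2 + log2 (log2 (INR n) + log2 (exp 1)))
     \/ l = b) /\
  (* (c) *)
  (a = 1%nat -> b = n ->
     is_minimizer n a b (xbar n n) /\
     forall y, is_minimizer n a b y ->
       forall i, (1 <= i <= n)%nat -> y i = xbar n n i) /\
  (* (d) *)
  (b = n -> (is_minimizer n a b (xbar n l) <-> l = n)) /\
  (* (e) *)
  (b = (n - 1)%nat ->
     (is_minimizer n a b (xbar n l) <->
        l = (n - 1)%nat \/ (n = 4%nat /\ (a = 1%nat \/ a = 2%nat) /\ l = 2%nat))).
Proof.
  intros Hn Ha Hab Hb Hl. split; [|split; [|split; [|split]]].
  - intros <-. apply part_a; lia.
  - intros Hbn. apply part_b; auto; lia.
  - intros -> ->. apply part_c; lia.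
  - intros ->. apply part_d; lia.
  - intros ->. apply part_e; lia.
Qed.
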